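(* Let $G$, $\Sigma_o$, a supervisor $S$ realized by $H$, secret initial states $X_{sec}\subseteq X_0$ and vulnerable events $\Sigma_v\subseteq\Sigma_o$ be given, and let $M^s$ be the simplified All Attack Structure. There exists an IS-detectable attacker (i.e., $S/G$ is IS-attackable) if and only if there exists a single attack structure $m$ of $M^s$ whose induced strategy $A_m$ is IS-detectable.
   Context: A plant is a finite automaton $G=(X,\Sigma,\delta,X_0)$ with partial transition function $\delta$ (extended to strings), initial states $X_0\subseteq X$; $\mathcal{L}(G,x_0)=\{s:\delta(x_0,s)\text{ defined}\}$, $\mathcal{L}(G)=\bigcup_{x_0\in X_0}\mathcal{L}(G,x_0)$. $\Sigma=\Sigma_o\dot\cup\Sigma_{uo}=\Sigma_c\dot\cup\Sigma_{uc}$, $P:\Sigma^*\to\Sigma_o^*$ the natural projection. A supervisor is $S:P(\mathcal{L}(G))\to\Gamma=\{\gamma\subseteq\Sigma:\Sigma_{uc}\subseteq\gamma\}$, realized by a deterministic automaton $H=(Z,\Sigma,\xi,z_0)$ with $\xi(z,\sigma)\neq z\Rightarrow\sigma\in\Sigma_o$ and $\Delta_H(\xi(z_0,s))=S(P(s))$ for $s\in\mathcal{L}(S/G)$ ($\Delta_H(z)$ = events defined at $z$). For any map $T$ from observable strings to subsets of $\Sigma$, $\mathcal{L}(T/G,x_0)$ is defined by $\epsilon\in\mathcal{L}(T/G,x_0)$ and $s\sigma\in\mathcal{L}(T/G,x_0)$ iff $s\in\mathcal{L}(T/G,x_0)$, $s\sigma\in\mathcal{L}(G,x_0)$, $\sigma\in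 T(P(s))$; $\mathcal{L}(T/G)=\bigcup_{x_0}\mathcal{L}(T/G,x_0)$. Estimates: $\mathcal{E}^C_{T/G}(\alpha)=\{\delta(x_0,s):x_0\in X_0,s\in\mathcal{L}(T/G,x_0),P(s)=\alpha\}$, $\mathcal{E}^I_{T/G}(\alpha)=\{x_0\in X_0:\exists s\in\mathcal{L}(T/G,x_0),P(s)=\alpha\}$. An attacker is a map $A:P(\mathcal{L}(G))\to\Sigma_o\cup\{\epsilon\}$ with $A(\epsilon)=\epsilon$ and, for $\alpha\sigma\in P(\mathcal{L}(G))$, $A(\alpha\sigma)=\sigma$ if $\sigma\notin\Sigma_v$, $A(\alpha\sigma)\in\Sigma_v\cup\{\epsilon\}$ if $\sigma\in\Sigma_v$. It induces $g_A(\epsilon)=\epsilon$, $g_A(\alpha\sigma)=g_A(\alpha)A(\alpha\sigma)$ and $S_A=S\circ g_A$. $A$ is stealthy along $\alpha\in P(\mathcal{L}(S_A/G))$ if $\mathcal{E}^C_{S/G}(g_A(\alpha))\neq\emptyset$. $A$ is IS-detectable if there exist $\alpha\in\Sigma_o^*$, $\sigma\in\Sigma_o$ with $\alpha\sigma\in P(\mathcal{L}(S_A/G))$ such that $A$ is stealthy along $\alpha$ and $\mathcal{E}^I_{S_A/G}(\alpha\sigma)\subseteq X_{sec}$. Operators: for $q\subseteq X$, $\gamma\subseteq\Sigma$, $\sigma\in\Sigma_o$: $\textsf{UR}_\gamma(q)=\{\delta(x,s):x\in q,s\in(\Sigma_{uo}\cap\gamma)^*\}$, $\textsf{NX}_\sigma(q)=\{\delta(x,\sigma):x\in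 q\}$, $\textsf{NX}_\epsilon(q)=q$, $\mathcal{O}(q,\gamma)=\{\sigma\in\Sigma_o\cap\gamma:\exists x\in q,\exists w\in(\Sigma_{uo}\cap\gamma)^*,\delta(x,w\sigma)\text{ defined}\}$. Augmented system: states $\tilde X\subseteq X_0\times X$, $\tilde X_0=\{(x_0,x_0)\}$, $\tilde\delta((x_0,x),\sigma)=(x_0,\delta(x,\sigma))$; $\widetilde{\textsf{UR}},\widetilde{\textsf{NX}},\mathcal{O}(\tilde q,\gamma)$ defined analogously; $I(\tilde q)=\{x_0:(x_0,x)\in\tilde q\text{ for some }x\}$. All Attack Structure (AAS): for $\sigma\in\Sigma_o$, $\hat\sigma$ is a doctored copy, $\hat\epsilon$ an erasure symbol; $\mathcal{V}(\sigma)=\{\hat\sigma':\sigma'\in\Sigma_v\}\cup\{\hat\epsilon\}$ if $\sigma\in\Sigma_v$, else $\{\hat\sigma\}$. $M=(Q,\Sigma_M,f,q_0)$, $\Sigma_M=\Sigma_o\cup\{\hat\sigma:\sigma\in\Sigma_o\}\cup\{\hat\epsilon\}$, $q_0=(X_0,\tilde X_0,z_0)$, states reachable from $q_0$, $Q=Q_e\dot\cup Q_a$: environment states $(q,\tilde q,z)$ with $q\subseteq X,\tilde q\subseteq\tilde X,z\in Z\cup\{z_{\textsf{att}}\}$ ($z_{\textsf{att}}$ new, $\Delta_H(z_{\textsf{att}})=\emptyset$); attack states $(q,\tilde q,z,\sigma)$. At $(q,\tilde q,z)$ enabled events are $\mathcal{O}(\tilde q,\Delta_H(z))$ if $z\in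 Z$, none if $z=z_{\textsf{att}}$, with $f((q,\tilde q,z),\sigma)=(q,\tilde q,z,\sigma)$. At $(q,\tilde q,z,\sigma)$ enabled events are $\mathcal{V}(\sigma)$, with $f((q,\tilde q,z,\sigma),\hat\sigma_a)=(q',\tilde q',z')$, $q'=\textsf{NX}_{\sigma_a}(\textsf{UR}_{\Delta_H(z)}(q))$, $\tilde q'=\widetilde{\textsf{NX}}_\sigma(\widetilde{\textsf{UR}}_{\Delta_H(z)}(\tilde q))$, $z'=\xi(z,\sigma_a)$ if $q'\ne\emptyset$ (with $\xi(z,\epsilon)=z$), $z'=z_{\textsf{att}}$ otherwise. Extended strings are those leading from $q_0$ to an environment state; for $h=\sigma_1\hat\sigma_{a1}\cdots\sigma_n\hat\sigma_{an}$, $\textsf{obs}(h)=\sigma_1\cdots\sigma_n$. Environment state $(q,\tilde q,z)$ is positive detected if $I(\tilde q)\subseteq X_{sec}$, negative detected if $I(\tilde q)\cap X_{sec}=\emptyset$ (together: $Q_{det}$); it is undetectable (set $Q_{ud}$) if $I(\tilde q)\cap X_{sec}\neq\emptyset$ and for every $(x_0,x)\in\widetilde{\textsf{UR}}_{\Delta_H(z)}(\tilde q)$ with $x_0\in X_{sec}$ there exists $(x_0',x)\in\widetilde{\textsf{UR}}_{\Delta_H(z)}(\tilde q)$ with $x_0'\notin X_{sec}$. The simplified AAS $M^s$ is the part of $M$ reachable from $q_0$ after removing all outgoing transitions from states in $Q_{det}\cup Q_{ud}$. A single attack structure (SAS) of $M^s$ is a sub-automaton $m$ of $M^s$ (states reachable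 from $q_0$, transitions a subset of those of $M^s$) such that every attack state of $m$ has exactly one enabled event in $m$, and every environment state of $m$ has in $m$ all the enabled events it has in $M^s$. For an observation $\alpha$, $\textsf{obs}^{-1}_m(\alpha)$ denotes the (at most one) extended string $h$ of $m$ with $\textsf{obs}(h)=\alpha$. The induced strategy $A_m$ is: $A_m(\epsilon)=\epsilon$; for nonempty $\alpha\in P(\mathcal{L}(G))$, if $\textsf{obs}^{-1}_m(\alpha)$ exists and its last event is $\hat\sigma_a$ then $A_m(\alpha)=\sigma_a$ (with $\sigma_a=\epsilon$ for $\hat\epsilon$); otherwise $A_m(\alpha)$ is the last event of $\alpha$. *)

From mathcomp Require Import all_boot.
Set Implicit Arguments.
Unset Strict Implicit.
Unset Printing Implicit Defensive.

Record setup := Setup {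
  s_X : finType;
  s_Sigma : finType;
  s_delta : s_X -> s_Sigma -> option s_X;
  s_X0 : {set s_X};
  s_So : {set s_Sigma};                     (* observable events; Sigma_uo = ~: So *)
  s_Suc : {set s_Sigma};
  s_Z : finType;                          (* states of H *)
  s_xi : s_Z -> s_Sigma -> option s_Z;
  s_z0 : s_Z;
  s_S : seq s_Sigma -> {set s_Sigma};         (* supervisor (values outside P(L(G)) irrelevant) *)
  s_Xsec : {set s_X};
  s_Sv : {set s_Sigma}
}.

Section Defs.
Variable D : setup.
Local Notation X := (@s_X D).
Local Notation Sigma := (@s_Sigma D).
Local Notation delta := (@s_delta D).
Local Notation X0 := (@s_X0 D).
Local Notation So := (@s_So D).
Local Notation Suc := (@s_Suc D).
Local Notation Z := (@s_Z D).
Local Notation xi := (@s_xi D).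
Local Notation z0 := (@s_z0 D).
Local Notation S := (@s_S D).
Local Notation Xsec := (@s_Xsec D).
Local Notation Sv := (@s_Sv D).

Fixpoint deltas (x : X) (s : seq Sigma) : option X :=
  match s with
  | [::] => Some x
  | a :: s' => match delta x a with Some y => deltas y s' | None => None end
  end.

Fixpoint xis (z : Z) (s : seq Sigma) : option Z :=
  match s with
  | [::] => Some z
  | a :: s' => match xi z a with Some y => xis y s' | None => None end
  end.

Definition P (s : seq Sigma) : seq Sigma := [seq a <- s | a \in So].

Definition inLG (s : seq Sigma) : Prop :=
  exists2 x0, x0 \in X0 & isSome (deltas x0 s).
Definition inPLG (al : seq Sigma) : Prop :=
  exists2 s, inLG s & P s = al.

Inductive inLT (T : seq Sigma -> {set Sigma}) (x0 : X) : seq Sigma -> Prop :=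
| LT_nil : inLT T x0 [::]
| LT_snoc s a : inLT T x0 s -> isSome (deltas x0 (rcons s a)) ->
                a \in T (P s) -> inLT T x0 (rcons s a).

Definition inLTG (T : seq Sigma -> {set Sigma}) (s : seq Sigma) : Prop :=
  exists2 x0, x0 \in X0 & inLT T x0 s.

Definition inPLTG (T : seq Sigma -> {set Sigma}) (al : seq Sigma) : Prop :=
  exists2 s, inLTG T s & P s = al.

Definition inEC (T : seq Sigma -> {set Sigma}) (al : seq Sigma) (x : X) : Prop :=
  exists2 x0, x0 \in X0 &
    exists s, [/\ inLT T x0 s, P s = al & deltas x0 s = Some x].

Definition inEI (T : seq Sigma -> {set Sigma}) (al : seq Sigma) (x0 : X) : Prop :=
  x0 \in X0 /\ exists2 s, inLT T x0 s & P s = al.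

(* Delta_H; None plays the role of z_att *)
Definition DeltaH (z : option Z) : {set Sigma} :=
  match z with
  | Some z => [set a | isSome (xi z a)]
  | None => set0
  end.

Definition wf_setup : Prop :=
  [/\ Xsec \subset X0,
      Sv \subset So,
      (* S is a supervisor: S(al) \in Gamma on P(L(G)) *)
      (forall al, inPLG al -> Suc \subset S al),
      (forall z a z', xi z a = Some z' -> z' <> z -> a \in So) &
      (forall s, inLTG S s ->
         exists2 z, xis z0 s = Some z & DeltaH (Some z) = S (P s))].

(* A : P(L(G)) -> Sigma_o U {eps}, None encoding eps *)
Definition is_attacker (A : seq Sigma -> option Sigma) : Prop :=
  A [::] = None /\
  forall al a, inPLG (rcons al a) ->
    (a \notin Sv -> A (rcons al a) = Some a) /\
    (a \in Sv -> match A (rcons al a) with Some b => b \in Sv | None => true end).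

Fixpoint gA_aux (A : seq Sigma -> option Sigma) (pre al : seq Sigma) : seq Sigma :=
  match al with
  | [::] => [::]
  | a :: al' =>
      let pre' := rcons pre a in
      match A pre' with
      | Some b => b :: gA_aux A pre' al'
      | None => gA_aux A pre' al'
      end
  end.
Definition gA (A : seq Sigma -> option Sigma) (al : seq Sigma) : seq Sigma :=
  gA_aux A [::] al.

Definition SA (A : seq Sigma -> option Sigma) : seq Sigma -> {set Sigma} :=
  fun al => S (gA A al).

Definition stealthy (A : seq Sigma -> option Sigma) (al : seq Sigma) : Prop :=
  exists x, inEC S (gA A al) x.

Definition IS_detectable (A : seq Sigma -> option Sigma) : Prop :=
  exists al a, [/\ a \in So, inPLTG (SA A) (rcons al a), stealthy A al &
    (forall x0, inEI (SA A) (rcons al a) x0 -> x0 \in Xsec)].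

Definition uo_step (gamma : {set Sigma}) : rel X :=
  fun x y => [exists a, [&& a \in gamma, a \notin So & delta x a == Some y]].

Definition UR (gamma : {set Sigma}) (q : {set X}) : {set X} :=
  [set x | [exists x' in q, connect (uo_step gamma) x' x]].
Definition NX (a : Sigma) (q : {set X}) : {set X} :=
  [set x | [exists x' in q, delta x' a == Some x]].
Definition URt (gamma : {set Sigma}) (qt : {set X * X}) : {set X * X} :=
  [set p | [exists p' in qt, (p'.1 == p.1) && connect (uo_step gamma) p'.2 p.2]].
Definition NXt (a : Sigma) (qt : {set X * X}) : {set X * X} :=
  [set p | [exists p' in qt, (p'.1 == p.1) && (delta p'.2 a == Some p.2)]].
Definition Ot (qt : {set X * X}) (gamma : {set Sigma}) : {set Sigma} :=
  [set a | [&& a \in So, a \in gamma &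
     [exists p in qt, exists x, connect (uo_step gamma) p.2 x && isSome (delta x a)]]].
Definition I (qt : {set X * X}) : {set X} :=
  [set x0 | [exists x, (x0, x) \in qt]].

Inductive hatev := HSym of Sigma | HEps.
Inductive evM := EObs of Sigma | EHat of hatev.

Inductive aas_state :=
| Env of {set X} & {set X * X} & option Z
| Att of {set X} & {set X * X} & option Z & Sigma.

Definition Vset (a : Sigma) (h : hatev) : bool :=
  match h with
  | HSym b => if a \in Sv then b \in Sv else b == a
  | HEps => a \in Sv
  end.

Definition q0 : aas_state := Env X0 [set (x, x) | x in X0] (Some z0).

Definition fM (st : aas_state) (e : evM) : option aas_state :=
  match st, e with
  | Env q qt z, EObs a =>
      if a \in Ot qt (DeltaH z) then Some (Att q qt z a) else None
  | Att q qt z a, EHat h =>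
      if Vset a h then
        let gamma := DeltaH z in
        let q' := match h with
                  | HSym b => NX b (UR gamma q)
                  | HEps => UR gamma q
                  end in
        let qt' := NXt a (URt gamma qt) in
        let z' := if q' == set0 then None else
                  match z, h with
                  | Some z1, HSym b => xi z1 b   (* undefined xi : z_att *)
                  | Some z1, HEps => Some z1
                  | None, _ => None
                  end in
        Some (Env q' qt' z')
      else None
  | _, _ => None
  end.

Definition pos_det (qt : {set X * X}) : bool := I qt \subset Xsec.
Definition neg_det (qt : {set X * X}) : bool := [disjoint I qt & Xsec].
Definition undetectable (qt : {set X * X}) (z : option Z) : bool :=
  (I qt :&: Xsec != set0) &&
  [forall p in URt (DeltaH z) qt,
     (p.1 \in Xsec) ==>
       [exists x0', ((x0', p.2) \in URt (DeltaH z) qt) && (x0' \notin Xsec)]].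

Definition stopped (st : aas_state) : bool :=
  match st with
  | Env _ qt z => [|| pos_det qt, neg_det qt | undetectable qt z]
  | Att _ _ _ _ => false
  end.

(* simplified AAS M^s (its reachable part is taken below via reachability) *)
Definition fMs (st : aas_state) (e : evM) : option aas_state :=
  if stopped st then None else fM st e.

(* A sub-automaton m is given by its (partial) transition function fm;       *)
(* its states are those reachable from q0 in fm.                             *)
Inductive reach (fm : aas_state -> evM -> option aas_state) : aas_state -> Prop :=
| reach0 : reach fm q0
| reachS st e st' : reach fm st -> fm st e = Some st' -> reach fm st'.

Definition is_SAS (fm : aas_state -> evM -> option aas_state) : Prop :=
  forall st, reach fm st ->
    (forall e st', fm st e = Some st' -> fMs st e = Some st') /\
    match st with
    | Env _ _ _ => forall e, isSome (fMs st e) -> isSome (fm st e)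
    | Att _ _ _ _ => exists! e, isSome (fm st e)
    end.

(* extended strings h = sigma_1 hat_1 ... sigma_n hat_n of m, as pairs *)
Inductive ext_run (fm : aas_state -> evM -> option aas_state) :
    aas_state -> seq (Sigma * hatev) -> aas_state -> Prop :=
| er_nil st : ext_run fm st [::] st
| er_cons st sa st2 st3 a h hs :
    fm st (EObs a) = Some sa -> fm sa (EHat h) = Some st2 ->
    ext_run fm st2 hs st3 -> ext_run fm st ((a, h) :: hs) st3.

Definition hat_to_opt (h : hatev) : option Sigma :=
  match h with HSym b => Some b | HEps => None end.

Definition induced_strategy (fm : aas_state -> evM -> option aas_state)
    (A : seq Sigma -> option Sigma) : Prop :=
  A [::] = None /\
  forall al a, inPLG (rcons al a) ->
    (forall hs st, ext_run fm q0 hs st -> map fst hs = rcons al a ->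
        A (rcons al a) = hat_to_opt (last (a, HEps) hs).2) /\
    ((forall hs st, ext_run fm q0 hs st -> map fst hs <> rcons al a) ->
        A (rcons al a) = Some a).

End Defs.

From mathcomp Require Import all_boot.
From mathcomp Require Import zify.
From Stdlib Require Import Classical ClassicalEpsilon.
Set Implicit Arguments.
Unset Strict Implicit.
Unset Printing Implicit Defensive.

(* Conversely, run the AAS along the
   observations of an IS-detectable attacker A, answering every observed
   event by the edit A makes of it. Along such a run the augmented component
   of each environment state collects the pairs (x0, x) such that x is
   reached from x0 in S_A/G at the instant of the last observation, and
   (q, z) is the supervisor's view of the edited observation, as long as A
   is stealthy. Hence the run never stops in a negative-detected state, nor in
   an undetectable one (grafting the remainder of a secret string onto its
   non-secret twin would contradict the detection), and it reaches a
   positive-detected state once alpha sigma has been observed. Cutting the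
   loops between two visits of the same attack state gives a run of M^s to
   that state leaving each attack state by a single event; an SAS extending
   these choices reproduces the run, so the same invariant shows that its
   induced strategy is IS-detectable. *)

Section Languages.
Variable D : setup.
Local Notation X := (@s_X D).
Local Notation Sigma := (@s_Sigma D).
Local Notation delta := (@s_delta D).
Local Notation X0 := (@s_X0 D).
Local Notation So := (@s_So D).
Local Notation xi := (@s_xi D).
Local Notation deltas := (@deltas D).
Local Notation P := (@P D).
Local Notation inLT := (@inLT D).
Local Notation inPLG := (@inPLG D).

Lemma deltas_cat x s t :
  deltas x (s ++ t) = if deltas x s is Some y then deltas y t else None.
Proof. by elim: s x => [|a s IH] x //=; case: (delta x a). Qed.

Lemma deltas_rcons x s a :
  deltas x (rcons s a) = if deltas x s is Some y then delta y a else None.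
Proof.
by rewrite -cats1 deltas_cat; case: (deltas x s) => // y /=; case: (delta y a).
Qed.

Lemma xis_rcons z s a :
  xis z (rcons s a) = if xis z s is Some y then xi y a else None.
Proof. by elim: s z => [|b s IH] z /=; case: (xi z _). Qed.

Lemma P_cat s t : P (s ++ t) = P s ++ P t.
Proof. exact: filter_cat. Qed.

Lemma P_rcons s a : P (rcons s a) = if a \in So then rcons (P s) a else P s.
Proof. exact: filter_rcons. Qed.

Definition unobservable (u : seq Sigma) : bool := all (fun a => a \notin So) u.

Lemma P_unobservable u : unobservable u -> P u = [::].
Proof. by move=> Hu; apply/eqP; rewrite -[_ == _]negbK -has_filter -all_predC. Qed.

Lemma P_split s al r : P s = al ++ r ->
  exists s1 s2, [/\ s = s1 ++ s2, P s1 = al & P s2 = r].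
Proof.
elim: s al => [|a s IH] al; first by case: al => //= <-; exists [::], [::].
rewrite /P /=; case: ifP => Ha; last first.
  by move/IH => [s1 [s2 [-> <- <-]]]; exists (a :: s1), s2; rewrite /P /= Ha.
case: al => [|b al] /=.
  by move=> <-; exists [::], (a :: s); rewrite /P /= Ha.
by case=> <- /IH [s1 [s2 [-> <- <-]]]; exists (a :: s1), s2; rewrite /P /= Ha.
Qed.

Definition ends_observable (s : seq Sigma) : Prop :=
  s = [::] \/ exists t a, s = rcons t a /\ a \in So.

Lemma split_ends_observable s :
  exists t u, [/\ s = t ++ u, ends_observable t & unobservable u].
Proof.
elim/last_ind: s => [|s a [t [u [-> Ht Hu]]]].
  by exists [::], [::]; split => //; left.
case Ha: (a \in So).
  exists (rcons (t ++ u) a), [::]; rewrite cats0; split => //.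
  by right; exists (t ++ u), a.
by exists t, (rcons u a); rewrite rcons_cat /unobservable all_rcons Ha.
Qed.

Lemma ends_observable_nil t : ends_observable t -> P t = [::] -> t = [::].
Proof. by case=> // -[t' [a [-> Ha]]]; rewrite P_rcons Ha; case: (P t'). Qed.

Lemma ends_observable_rcons t al a : ends_observable t -> P t = rcons al a ->
  exists t', [/\ t = rcons t' a, P t' = al & a \in So].
Proof.
case=> [->|[t' [a' [-> Ha]]]]; first by case: al.
by rewrite P_rcons Ha => /rcons_inj [<- <-]; exists t'.
Qed.

Section ClosedLoop.
Variables (T : seq Sigma -> {set Sigma}) (x0 : X).

Lemma inLT_rcons_inv s a : inLT T x0 (rcons s a) ->
  [/\ inLT T x0 s, isSome (deltas x0 (rcons s a)) & a \in T (P s)].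
Proof.
move=> H; inversion H as [Hn|s' a' H1 H2 H3 Heq]; first by case: s {H} Hn.
by move/rcons_inj: Heq => [-> ->] in H1 H2 H3 *.
Qed.

Lemma inLT_prefix s t : inLT T x0 (s ++ t) -> inLT T x0 s.
Proof.
elim/last_ind: t => [|t a IH]; first by rewrite cats0.
by rewrite -rcons_cat => /inLT_rcons_inv [/IH].
Qed.

Lemma inLT_deltas s : inLT T x0 s -> exists x, deltas x0 s = Some x.
Proof.
case=> [|s' a _]; first by exists x0.
by case: (deltas _ _) => // x _; exists x.
Qed.

Lemma inLT_cat_unobservable s x u y : inLT T x0 s -> deltas x0 s = Some x ->
  deltas x u = Some y -> all (fun a => (a \notin So) && (a \in T (P s))) u ->
  inLT T x0 (s ++ u).
Proof.
move=> Hs Hx; elim/last_ind: u y => [|u a IH] y; first by rewrite cats0.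
rewrite deltas_rcons all_rcons => + /andP [/andP [Ha1 Ha2] Hu].
case Hd: (deltas x u) => [w|//] Hw.
rewrite -rcons_cat; apply: LT_snoc; first exact: (IH w).
  by rewrite deltas_rcons deltas_cat Hx Hd Hw.
have Hu' : unobservable u by apply/allP => b /(allP Hu) /andP [].
by rewrite P_cat (P_unobservable Hu') cats0.
Qed.

Lemma inLT_cat_unobservable_enabled s u : inLT T x0 (s ++ u) ->
  unobservable u -> all (fun a => a \in T (P s)) u.
Proof.
elim/last_ind: u => [|u a IH] //.
rewrite -rcons_cat /unobservable !all_rcons => /inLT_rcons_inv [H1 _ H3] /andP [Ha Hu].
by rewrite (IH H1 Hu) andbT; rewrite P_cat (P_unobservable Hu) cats0 in H3.
Qed.

End ClosedLoop.

(* The continuation [v] of [t] depends only on the observation and the state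
   reached, so it can be grafted onto any [s'] that agrees with [t] on both. *)
Lemma inLT_splice T x0 x0' t v s' : inLT T x0 (t ++ v) -> inLT T x0' s' ->
  P s' = P t -> deltas x0' s' = deltas x0 t -> inLT T x0' (s' ++ v).
Proof.
move=> + Hs' HP Hd; elim/last_ind: v => [|v a IH]; first by rewrite !cats0.
rewrite -!rcons_cat => /inLT_rcons_inv [H1 H2 H3].
apply: LT_snoc; first exact: IH.
  by move: H2; rewrite !deltas_rcons !deltas_cat Hd.
by rewrite P_cat HP -P_cat.
Qed.

Lemma connect_uo_stepP (g : {set Sigma}) x y :
  reflect (exists2 u, all (fun a => (a \notin So) && (a \in g)) u & deltas x u = Some y)
          (connect (uo_step g) x y).
Proof.
apply: (iffP connectP) => [[p Hp ->] {y}|[u]].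
  elim: p x Hp => [|z p IH] x /=; first by exists [::].
  move=> /andP [/existsP [a /and3P [Ha1 Ha2 /eqP Ha3]] /IH [u Hu1 Hu2]].
  by exists (a :: u); rewrite /= ?Ha1 ?Ha2 ?Ha3.
elim: u x => [|a u IH] x /=; first by move=> _ [->]; exists [::].
move=> /andP [/andP [Ha1 Ha2] Hu]; case Hd: (delta x a) => [z|//] /(IH z Hu) [p Hp ->].
exists (z :: p) => //=; rewrite Hp andbT.
by apply/existsP; exists a; rewrite Ha1 Ha2 Hd /=.
Qed.

Section Reachability.
Variable T : seq Sigma -> {set Sigma}.

(* [inEC T al x] unfolds to [exists2 x0, x0 \in X0 & reaches T al x0 x]. *)
Definition reaches (al : seq Sigma) (x0 x : X) : Prop :=
  exists s, [/\ inLT T x0 s, P s = al & deltas x0 s = Some x].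

(* [x] is reached at the very instant the last event of [al] is observed. *)
Definition reaches_obs (al : seq Sigma) (x0 x : X) : Prop :=
  exists s, [/\ inLT T x0 s, P s = al, deltas x0 s = Some x & ends_observable s].

Lemma reaches_obs_reaches al x0 x : reaches_obs al x0 x -> reaches al x0 x.
Proof. by move=> [s [H1 H2 H3 _]]; exists s. Qed.

Lemma reaches_uo al x0 x y :
  reaches al x0 x -> connect (uo_step (T al)) x y -> reaches al x0 y.
Proof.
move=> [s [H1 H2 H3]] /connect_uo_stepP [u Hu1 Hu2].
have Hu : unobservable u by apply/allP => a /(allP Hu1) /andP [].
exists (s ++ u); split.
- by apply: inLT_cat_unobservable H1 H3 Hu2 _; rewrite H2.
- by rewrite P_cat (P_unobservable Hu) cats0.
- by rewrite deltas_cat H3.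
Qed.

Lemma reachesP al x0 y : reaches al x0 y ->
  exists2 x, reaches_obs al x0 x & connect (uo_step (T al)) x y.
Proof.
move=> [s [H1 H2 H3]]; have [t [u [Es Ht Hu]]] := split_ends_observable s; subst s.
have [x Hx] := inLT_deltas (inLT_prefix H1).
have HPt : P t = al by rewrite -H2 P_cat (P_unobservable Hu) cats0.
exists x; first by exists t; split => //; apply: inLT_prefix H1.
apply/connect_uo_stepP; exists u; last by rewrite deltas_cat Hx in H3.
have := inLT_cat_unobservable_enabled H1 Hu; rewrite HPt => Hu'.
by apply/allP => a Ha; rewrite (allP Hu a Ha) (allP Hu' a Ha).
Qed.

Lemma reaches_obs_rcons al x0 x a y : reaches al x0 x -> a \in So -> a \in T al ->
  delta x a = Some y -> reaches_obs (rcons al a) x0 y.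
Proof.
move=> [s [H1 H2 H3]] Ha Hal Hy; exists (rcons s a); split.
- by apply: LT_snoc; rewrite ?deltas_rcons ?H3 ?Hy ?H2.
- by rewrite P_rcons Ha H2.
- by rewrite deltas_rcons H3.
- by right; exists s, a.
Qed.

Lemma reaches_obs_rcons_inv al a x0 y : reaches_obs (rcons al a) x0 y ->
  exists x, [/\ reaches al x0 x, delta x a = Some y, a \in T al & a \in So].
Proof.
move=> [s [H1 H2 H3 H4]]; have [t [Es Ht Ha]] := ends_observable_rcons H4 H2.
subst s; have [Ht1 _ Ht3] := inLT_rcons_inv H1.
have [x Hx] := inLT_deltas Ht1.
exists x; split => //; first by exists t.
  by rewrite deltas_rcons Hx in H3.
by rewrite -Ht.
Qed.

Lemma reaches_obs_nil x0 x : reaches_obs [::] x0 x -> x = x0.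
Proof.
by move=> [s [_ H2 H3 /ends_observable_nil /(_ H2) Es]]; move: H3; rewrite Es => -[].
Qed.

Lemma reaches_obs_refl x0 : reaches_obs [::] x0 x0.
Proof. by exists [::]; split => //; [apply: LT_nil | left]. Qed.

End Reachability.

Lemma reaches_nil_eq T T' x0 x : T [::] = T' [::] ->
  reaches T [::] x0 x -> reaches T' [::] x0 x.
Proof.
move=> E /reachesP [xl /reaches_obs_nil -> Hc]; rewrite E in Hc.
exact: reaches_uo (reaches_obs_reaches (reaches_obs_refl T' x0)) Hc.
Qed.

Lemma reaches_prefix T al r x0 x :
  reaches T (al ++ r) x0 x -> exists y, reaches_obs T al x0 y.
Proof.
move=> [s [Hs HP _]]; have [s1 [s2 [Es H1 _]]] := P_split HP; subst s.
have [t [u [Es Ht Hu]]] := split_ends_observable s1; subst s1.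
have Hit : inLT T x0 t by apply: inLT_prefix (inLT_prefix Hs).
have [y Hy] := inLT_deltas Hit.
by exists y, t; rewrite -H1 P_cat (P_unobservable Hu) cats0.
Qed.

Lemma inPLTG_reaches T al :
  inPLTG T al -> exists2 x0, x0 \in X0 & exists x, reaches T al x0 x.
Proof.
move=> [s [x0 Hx0 Hs] HP]; have [x Hx] := inLT_deltas Hs.
by exists x0 => //; exists x, s.
Qed.

Lemma inPLTG_rcons_enabled T al a r : inPLTG T (rcons al a ++ r) ->
  exists x0 x, [/\ x0 \in X0, reaches T al x0 x, isSome (delta x a),
                   a \in T al & a \in So].
Proof.
move=> /inPLTG_reaches [x0 Hx0 [_ /reaches_prefix [y /reaches_obs_rcons_inv]]].
by move=> [x [HR Hd Ha1 Ha2]]; exists x0, x; rewrite Hd.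
Qed.

Lemma reaches_inPLTG T al x0 x : x0 \in X0 -> reaches T al x0 x -> inPLTG T al.
Proof. by move=> Hx0 [s [Hs HP _]]; exists s => //; exists x0. Qed.

Lemma reaches_inPLG T al x0 x : x0 \in X0 -> reaches T al x0 x -> inPLG al.
Proof. by move=> Hx0 [s [Hs HP Hd]]; exists s => //; exists x0; rewrite ?Hd. Qed.

Lemma inPLTG_prefix_inPLG T al r : inPLTG T (al ++ r) -> inPLG al.
Proof.
move=> /inPLTG_reaches [x0 Hx0 [x /reaches_prefix [y /reaches_obs_reaches]]].
exact: reaches_inPLG.
Qed.

End Languages.

Section Runs.
Variable D : setup.
Local Notation Sigma := (@s_Sigma D).
Local Notation trans := (aas_state D -> evM D -> option (aas_state D)).

Lemma ext_run_cat (fm : trans) st hs1 hs2 st3 :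
  ext_run fm st (hs1 ++ hs2) st3 <->
  exists st2, ext_run fm st hs1 st2 /\ ext_run fm st2 hs2 st3.
Proof.
split; last first.
  by move=> [st2 [H1 H2]]; elim: H1 H2 => // *; econstructor; eauto.
elim: hs1 st => [|[a h] hs1 IH] st /=; first by exists st; split => //; constructor.
move=> H; inversion H as [|? sa st2 ? ? ? ? E1 E2 R]; subst.
have [st4 [H1 H2]] := IH _ R.
by exists st4; split => //; econstructor; eauto.
Qed.

Lemma ext_run_rcons (fm : trans) st hs a h st3 :
  ext_run fm st (rcons hs (a, h)) st3 <->
  exists st2 sa, [/\ ext_run fm st hs st2, fm st2 (EObs a) = Some sa &
                     fm sa (EHat h) = Some st3].
Proof.
rewrite -cats1 ext_run_cat; split.
  move=> [st2 [H1 H2]]; inversion H2 as [|? sa ? ? ? ? ? E1 E2 R]; subst.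
  by inversion R; subst; exists st2, sa.
move=> [st2 [sa [H1 H2 H3]]]; exists st2; split => //.
by econstructor; eauto; constructor.
Qed.

Lemma ext_run_det (fm : trans) st hs s1 s2 :
  ext_run fm st hs s1 -> ext_run fm st hs s2 -> s1 = s2.
Proof.
elim: hs st => [|[a h] hs IH] st H H'; first by inversion H; inversion H'; congruence.
inversion H as [|? sa st2 ? ? ? ? E1 E2 R]; subst.
inversion H' as [|? sa' st2' ? ? ? ? E1' E2' R']; subst.
rewrite E1 in E1'; case: E1' => Esa; subst sa'.
rewrite E2 in E2'; case: E2' => Est; subst st2'.
exact: IH R R'.
Qed.

Lemma ext_run_sub (fm fm' : trans) st hs st' :
  (forall s e s', fm s e = Some s' -> fm' s e = Some s') ->
  ext_run fm st hs st' -> ext_run fm' st hs st'.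
Proof. by move=> Hs; elim=> *; econstructor; eauto. Qed.

Lemma map_fst_rcons (hs : seq (Sigma * hatev D)) al a : map fst hs = rcons al a ->
  exists hs' h, hs = rcons hs' (a, h) /\ map fst hs' = al.
Proof.
case/lastP: hs => [|hs' [a' h]]; first by case: al.
by rewrite map_rcons => /rcons_inj [<- /= ->]; exists hs', h.
Qed.

Lemma fMs_fM st e st' : @fMs D st e = Some st' -> fM st e = Some st'.
Proof. by rewrite /fMs; case: ifP. Qed.

End Runs.

Section Estimates.
Variable D : setup.
Hypothesis Hwf : wf_setup D.
Local Notation X := (@s_X D).
Local Notation Sigma := (@s_Sigma D).
Local Notation X0 := (@s_X0 D).
Local Notation So := (@s_So D).
Local Notation xi := (@s_xi D).
Local Notation z0 := (@s_z0 D).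
Local Notation S := (@s_S D).

Lemma xis_P z s z' : xis z s = Some z' -> xis z (@P D s) = Some z'.
Proof.
have [_ _ _ Hxi _] := Hwf.
elim: s z => [|a s IH] z //=; case Hz: (xi z a) => [y|//] Hy.
rewrite /P /=; case: ifP => Ha /=; first by rewrite Hz; apply: IH.
have Eyz : y = z by apply: contraFeq Ha => /eqP; apply: Hxi Hz.
by subst y; apply: IH.
Qed.

(* H realizes S on L(S/G), and its state only depends on the observable part
   of a string. *)
Lemma DeltaH_stealthy g z1 : (exists x, inEC S g x) -> xis z0 g = Some z1 ->
  DeltaH (Some z1) = S g.
Proof.
have [_ _ _ _ Hreal] := Hwf.
move=> [x [x0 Hx0 [s [H1 H2 _]]]] Hz.
have [z Hz' HD] := Hreal _ (ex_intro2 _ _ x0 Hx0 H1).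
by move: (xis_P Hz'); rewrite H2 Hz -H2 => -[->].
Qed.

(* The first component [q] of an AAS state is only known up to unobservable
   extensions: it lies between the states reached at the last observation of
   [g] and all the states consistent with [g]. *)
Definition brackets (g : seq Sigma) (q : {set X}) : Prop :=
  (forall x0 x, x0 \in X0 -> reaches_obs S g x0 x -> x \in q) /\
  (forall x, x \in q -> inEC S g x).

Lemma brackets_neq0 g q : brackets g q -> (exists x, inEC S g x) -> q != set0.
Proof.
move=> [Hlo _] [x [x0 Hx0 HR]].
rewrite -[g]cats0 in HR; have [y Hy] := reaches_prefix HR.
by apply/set0Pn; exists y; apply: Hlo Hx0 Hy.
Qed.

Lemma brackets_UR g q : brackets g q -> brackets g (UR (S g) q).
Proof.
move=> [Hlo Hup]; split.
  by move=> x0 x Hx0 HR; rewrite inE; apply/existsP; exists x; rewrite (Hlo _ _ Hx0 HR) connect0.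
move=> x; rewrite inE => /existsP [x' /andP [/Hup [x0 Hx0 HR] Hc]].
by exists x0 => //; apply: reaches_uo HR Hc.
Qed.

Lemma brackets_NX g q b : b \in So -> b \in S g -> brackets g q ->
  brackets (rcons g b) (NX b (UR (S g) q)).
Proof.
move=> Hb Hbg [Hlo Hup]; split.
  move=> x0 x Hx0 /reaches_obs_rcons_inv [x' [/reachesP [x'' HRL Hc] Hd _ _]].
  rewrite inE; apply/existsP; exists x'; rewrite Hd eqxx andbT inE.
  by apply/existsP; exists x''; rewrite (Hlo _ _ Hx0 HRL).
move=> x; rewrite !inE => /existsP [x' /andP [Hx' /eqP Hd]].
move: Hx'; rewrite inE => /existsP [x'' /andP [/Hup [x0 Hx0 HR] Hc]].
have HR' := reaches_uo HR Hc.
by exists x0 => //; apply: reaches_obs_reaches (reaches_obs_rcons HR' Hb Hbg Hd).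
Qed.

Definition sup_tracks (g : seq Sigma) (q : {set X}) (z : option (s_Z D)) : Prop :=
  forall z1, z = Some z1 ->
    [/\ xis z0 g = Some z1, exists x, inEC S g x & brackets g q].

Lemma sup_tracks_NX g q z1 b : b \in So -> sup_tracks g q (Some z1) ->
  let q' := NX b (UR (S g) q) in
  let z' := if q' == set0 then None else xi z1 b in
  sup_tracks (rcons g b) q' z' /\
  ((exists x, inEC S (rcons g b) x) -> exists z1', z' = Some z1').
Proof.
move=> Hb /(_ z1 erefl) [Hxs Hst Hbr] q' z'.
have HD := DeltaH_stealthy Hst Hxs.
have Hxb : b \in S g -> exists z1', xi z1 b = Some z1'.
  by rewrite -HD inE; case: (xi z1 b) => // z1' _; exists z1'.
split => [z1' Hz'|Hst'].
  have Hq' : q' != set0 by move: Hz'; rewrite /z'; case: (q' == set0).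
  have {}Hz' : xi z1 b = Some z1' by move: Hz'; rewrite /z' (negbTE Hq').
  have Hbg : b \in S g by rewrite -HD inE Hz'.
  have Hbr' := brackets_NX Hb Hbg Hbr.
  split => //; first by rewrite xis_rcons Hxs.
  by have /set0Pn [x Hx] := Hq'; exists x; apply: Hbr'.2.
have [x [x0 Hx0 HR]] := Hst'.
rewrite -[rcons g b]cats0 in HR.
have [y /[dup] Hy /reaches_obs_rcons_inv [_ [_ _ Hbg _]]] := reaches_prefix HR.
have [z1' Hz1'] := Hxb Hbg.
have Hq' : q' != set0.
  by apply/set0Pn; exists y; apply: (brackets_NX Hb Hbg Hbr).1 Hx0 Hy.
by exists z1'; rewrite /z' (negbTE Hq').
Qed.

Lemma sup_tracks_UR g q z1 : sup_tracks g q (Some z1) ->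
  sup_tracks g (UR (S g) q) (if UR (S g) q == set0 then None else Some z1) /\
  exists z1', (if UR (S g) q == set0 then None else Some z1) = Some z1'.
Proof.
move=> /(_ z1 erefl) [Hxs Hst /brackets_UR Hbr].
rewrite (negbTE (brackets_neq0 Hbr Hst)); split; last by exists z1.
by move=> _ [<-].
Qed.

End Estimates.

Section Tracking.
Variable D : setup.
Hypothesis Hwf : wf_setup D.
Local Notation X := (@s_X D).
Local Notation Sigma := (@s_Sigma D).
Local Notation delta := (@s_delta D).
Local Notation X0 := (@s_X0 D).
Local Notation So := (@s_So D).
Local Notation S := (@s_S D).
Local Notation strategy := (seq Sigma -> option Sigma).

Lemma gA_rcons (B : strategy) al a :
  gA B (rcons al a) = gA B al ++ seq_of_opt (B (rcons al a)).
Proof.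
suff Haux pre : gA_aux B pre (rcons al a) =
    gA_aux B pre al ++ seq_of_opt (B (pre ++ rcons al a)) by apply: Haux.
elim: al pre => [|b al IH] pre /=; first by rewrite cats1; case: (B (rcons pre a)).
by rewrite IH cat_rcons; case: (B (rcons pre b)).
Qed.

Lemma gA_prefix (B : strategy) al r : exists w, gA B (al ++ r) = gA B al ++ w.
Proof.
elim/last_ind: r => [|r a [w Hw]]; first by exists [::]; rewrite !cats0.
by exists (w ++ seq_of_opt (B (rcons (al ++ r) a))); rewrite -rcons_cat gA_rcons Hw catA.
Qed.

Lemma stealthy_prefix (A : strategy) al r :
  stealthy A (al ++ r) -> stealthy A al.
Proof.
rewrite /stealthy; have [w ->] := gA_prefix A al r.
by move=> [x [x0 Hx0 /reaches_prefix [y /reaches_obs_reaches HR]]]; exists y, x0.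
Qed.

Definition consistent (B : strategy) (hs : seq (Sigma * hatev D)) : Prop :=
  forall hs1 a h hs2, hs = hs1 ++ (a, h) :: hs2 ->
    B (rcons (map fst hs1) a) = hat_to_opt h.

Lemma consistent_rcons B hs a h :
  consistent B (rcons hs (a, h)) <->
  consistent B hs /\ B (rcons (map fst hs) a) = hat_to_opt h.
Proof.
split.
  move=> H; split; last by apply: (H hs a h [::]); rewrite cats1.
  by move=> hs1 a' h' hs2 E; apply: (H hs1 a' h' (rcons hs2 (a, h))); rewrite E rcons_cat.
move=> [H1 H2] hs1 a' h' hs2; case/lastP: hs2 => [|hs2 y].
  by rewrite cats1 => /rcons_inj [<- <- <-].
by rewrite -rcons_cons -rcons_cat => /rcons_inj [/H1].
Qed.

(* The invariant of AAS runs consistent with [B], after observing [al]: [qt]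
   is the augmented estimate of S_B/G and (q, z) the supervisor's view of the
   edited observation g_B(al). *)
Definition tracks (B : strategy) (al : seq Sigma) (st : aas_state D) : Prop :=
  if st is Env q qt z then
    (forall x0 x, (x0, x) \in qt <-> x0 \in X0 /\ reaches_obs (SA B) al x0 x) /\
    sup_tracks (gA B al) q z
  else False.

Section TrackedState.
Variables (B : strategy) (al : seq Sigma) (q : {set X}) (qt : {set X * X}).
Variable z1 : s_Z D.
Hypothesis Htr : tracks B al (Env q qt (Some z1)).

Lemma tracks_DeltaH : DeltaH (Some z1) = SA B al.
Proof. by have [_ /(_ z1 erefl) [Hxs Hst _]] := Htr; apply: DeltaH_stealthy. Qed.

Lemma in_URt x0 x : (x0, x) \in URt (DeltaH (Some z1)) qt <->
  x0 \in X0 /\ reaches (SA B) al x0 x.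
Proof.
have [Hqt _] := Htr; rewrite tracks_DeltaH inE; split.
  move=> /existsP [[x0' x'] /andP [Hp /andP [/eqP /= E Hc]]]; subst x0'.
  have [Hx0 HR] := (Hqt _ _).1 Hp.
  by split => //; apply: reaches_uo (reaches_obs_reaches HR) Hc.
move=> [Hx0 /reachesP [x' HR Hc]]; apply/existsP; exists (x0, x').
by rewrite /= eqxx Hc andbT (Hqt _ _).2.
Qed.

Lemma in_Ot a : a \in Ot qt (DeltaH (Some z1)) <->
  [/\ a \in So, a \in SA B al &
     exists x0 x, [/\ x0 \in X0, reaches (SA B) al x0 x & isSome (delta x a)]].
Proof.
have [Hqt _] := Htr; rewrite inE tracks_DeltaH; split.
  move=> /and3P [Ha1 Ha2 /existsP [[x0 x'] /andP [Hp /existsP [x /andP [Hc Hd]]]]].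
  have [Hx0 HR] := (Hqt _ _).1 Hp; split => //.
  by exists x0, x; split => //; apply: reaches_uo (reaches_obs_reaches HR) Hc.
move=> [Ha1 Ha2 [x0 [x [Hx0 /reachesP [x' HR Hc] Hd]]]].
rewrite Ha1 Ha2; apply/existsP; exists (x0, x').
by rewrite (Hqt _ _).2 //; apply/existsP; exists x; rewrite Hc Hd.
Qed.

Lemma in_NXt a x0 y : a \in So -> a \in SA B al ->
  (x0, y) \in NXt a (URt (DeltaH (Some z1)) qt) <->
  x0 \in X0 /\ reaches_obs (SA B) (rcons al a) x0 y.
Proof.
move=> Ha1 Ha2; rewrite inE; split.
  move=> /existsP [[x0' x] /andP [Hp /andP [/eqP /= E /eqP Hd]]]; subst x0'.
  have [Hx0 HR] := (in_URt _ _).1 Hp.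
  by split => //; apply: reaches_obs_rcons HR Ha1 Ha2 Hd.
move=> [Hx0 /reaches_obs_rcons_inv [x [HR Hd _ _]]].
by apply/existsP; exists (x0, x); rewrite /= eqxx Hd eqxx !andbT; apply/in_URt.
Qed.

End TrackedState.

Lemma Vset_So a h : a \in So -> Vset a h -> if h is HSym b then b \in So else true.
Proof.
have [_ HSv _ _ _] := Hwf.
case: h => [b|] //= Ha; case: ifP => _; [exact: (subsetP HSv) | by move/eqP ->].
Qed.

Lemma tracks_step B al q qt z1 a h st' :
  tracks B al (Env q qt (Some z1)) -> a \in Ot qt (DeltaH (Some z1)) ->
  B (rcons al a) = hat_to_opt h ->
  fM (Att q qt (Some z1) a) (EHat h) = Some st' ->
  tracks B (rcons al a) st' /\
  (stealthy B (rcons al a) -> exists q' qt' z1', st' = Env q' qt' (Some z1')).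
Proof.
move=> Htr HOt HB; have HD := tracks_DeltaH Htr.
have [Ha1 Ha2 _] := (in_Ot Htr a).1 HOt.
have Hqt := fun x0 y => in_NXt Htr x0 y Ha1 Ha2.
have [_ Hsup] := Htr; rewrite /fM HD; rewrite HD in Hqt.
case: h HB => [b|] HB; case: ifP => // HV [<-].
  have Eg : gA B (rcons al a) = rcons (gA B al) b by rewrite gA_rcons HB cats1.
  have [Hsup' Hz'] := sup_tracks_NX Hwf (Vset_So Ha1 HV) Hsup.
  rewrite /tracks /stealthy Eg; split => // /Hz' [z1' ->].
  by exists (NX b (UR (S (gA B al)) q)), (NXt a (URt (S (gA B al)) qt)), z1'.
have Eg : gA B (rcons al a) = gA B al by rewrite gA_rcons HB cats0.
have [Hsup' [z1' Hz']] := sup_tracks_UR Hsup.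
rewrite /tracks /stealthy Eg; split => // _; rewrite Hz'.
by exists (UR (S (gA B al)) q), (NXt a (URt (S (gA B al)) qt)), z1'.
Qed.

End Tracking.

Section Simulation.
Variable D : setup.
Hypothesis Hwf : wf_setup D.
Local Notation Sigma := (@s_Sigma D).
Local Notation X0 := (@s_X0 D).
Local Notation Xsec := (@s_Xsec D).
Local Notation Sv := (@s_Sv D).
Local Notation q0 := (q0 D).

Lemma tracks_q0 B x00 : x00 \in X0 -> tracks B [::] q0.
Proof.
move=> Hx00; split.
  move=> x0 x; split; first by case/imsetP => y Hy [-> ->]; split; last exact: reaches_obs_refl.
  by move=> [Hx0 /reaches_obs_nil ->]; apply: imset_f.
move=> z1 [<-]; split => //.
  by exists x00, x00 => //; exists [::]; split => //; apply: LT_nil.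
split; first by move=> x0 x Hx0 /reaches_obs_nil ->.
by move=> x Hx; exists x => //; exists [::]; split => //; apply: LT_nil.
Qed.

Lemma fM_EObs st a sa : @fM D st (EObs a) = Some sa ->
  exists q qt z1, [/\ st = Env q qt (Some z1), sa = Att q qt (Some z1) a &
                      a \in Ot qt (DeltaH (Some z1))].
Proof.
case: st => [q qt [z1|]|//] /=; case: ifP => // HO [<-]; first by exists q, qt, z1.
by move: HO; rewrite inE /= in_set0 andbF.
Qed.

Lemma tracks_run B hs st x00 : x00 \in X0 -> ext_run (@fM D) q0 hs st ->
  consistent B hs -> tracks B (map fst hs) st.
Proof.
move=> Hx00; elim/last_ind: hs st => [|hs [a h] IH] st.
  by move=> H; inversion H; subst => _; apply: tracks_q0 Hx00.
move/ext_run_rcons => [st2 [sa [H1 H2 H3]]] /consistent_rcons [Hc1 Hc2].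
have [q [qt [z1 [E1 E2 HO]]]] := fM_EObs H2; subst st2 sa.
by rewrite map_rcons; apply: (tracks_step Hwf (IH _ H1 Hc1) HO Hc2 H3).1.
Qed.

Lemma tracks_not_neg_det B al r q qt z : tracks B al (Env q qt z) ->
  inPLTG (SA B) (al ++ r) ->
  (forall x0, inEI (SA B) (al ++ r) x0 -> x0 \in Xsec) -> ~~ neg_det qt.
Proof.
move=> [Hqt _] [s [x0 Hx0 Hs] HP] Hdet.
have Hsec : x0 \in Xsec by apply: Hdet; split => //; exists s.
have [y Hy] := inLT_deltas Hs.
have [x Hx] : exists x, reaches_obs (SA B) al x0 x.
  by apply: (reaches_prefix (r := r) (x := y)); exists s.
have HI : x0 \in I qt by rewrite inE; apply/existsP; exists x; apply/Hqt.
by apply/negP => /disjointFr /(_ HI); rewrite Hsec.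
Qed.

(* An undetectable state pairs the secret initial state of every string with
   a non-secret one leading to the same plant state; grafting the rest of the
   string onto the latter contradicts the positive detection. *)
Lemma tracks_not_undetectable B al r q qt z1 : tracks B al (Env q qt (Some z1)) ->
  inPLTG (SA B) (al ++ r) ->
  (forall x0, inEI (SA B) (al ++ r) x0 -> x0 \in Xsec) ->
  ~~ undetectable qt (Some z1).
Proof.
move=> Htr [s [x0 Hx0 Hs] HP] Hdet.
have Hsec : x0 \in Xsec by apply: Hdet; split => //; exists s.
have [s1 [s2 [Es H1 H2]]] := P_split HP; subst s.
have [x Hx] := inLT_deltas (inLT_prefix Hs).
have Hin : (x0, x) \in URt (DeltaH (Some z1)) qt.
  by apply/(in_URt Hwf Htr); split => //; exists s1; split => //; apply: inLT_prefix Hs.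
apply/negP => /andP [_ /forallP /(_ (x0, x))].
rewrite Hin Hsec /= => /existsP [x0' /andP [/(in_URt Hwf Htr) [Hx0' [s' [Hs' HP' Hd']]] Hns]].
have Hsp : inLT (SA B) x0' (s' ++ s2).
  by apply: inLT_splice Hs Hs' _ _; rewrite ?HP' ?H1 ?Hd' ?Hx.
have : x0' \in Xsec by apply: Hdet; split => //; exists (s' ++ s2); rewrite // P_cat HP' H2.
by rewrite (negbTE Hns).
Qed.

Definition hat_of (o : option Sigma) : hatev D :=
  if o is Some b then HSym b else HEps D.

Lemma hat_ofK : cancel hat_of (@hat_to_opt D).
Proof. by case. Qed.

Lemma attacker_Vset A al a : is_attacker A -> inPLG (rcons al a) ->
  Vset a (hat_of (A (rcons al a))).
Proof.
move=> [_ HA] /HA [H1 H2]; case Ha: (a \in Sv) => /=.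
  by move: (H2 Ha); case: (A (rcons al a)) => [b|] //= Hb; rewrite Ha.
by rewrite H1 ?Ha //= Ha eqxx.
Qed.

Lemma run_extend A hs al q qt z1 a r : is_attacker A ->
  ext_run (@fMs D) q0 hs (Env q qt (Some z1)) -> ~~ stopped (Env q qt (Some z1)) ->
  map fst hs = al -> consistent A hs -> inPLTG (SA A) (rcons al a ++ r) ->
  exists h st', [/\ ext_run (@fMs D) q0 (rcons hs (a, h)) st',
     consistent A (rcons hs (a, h)), tracks A (rcons al a) st' &
     (stealthy A (rcons al a) -> exists q' qt' z1', st' = Env q' qt' (Some z1'))].
Proof.
move=> Hatt Hrun Hns Hal Hcon Hpl.
have [x0 [x [Hx0 HR Hd Ha2 Ha1]]] := inPLTG_rcons_enabled Hpl.
have Htr : tracks A al (Env q qt (Some z1)).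
  by rewrite -Hal; apply: tracks_run Hx0 _ Hcon; apply: ext_run_sub (@fMs_fM D) Hrun.
have HOt : a \in Ot qt (DeltaH (Some z1)) by apply/(in_Ot Hwf Htr); split => //; exists x0, x.
have HV := attacker_Vset Hatt (inPLTG_prefix_inPLG Hpl).
set h := hat_of (A (rcons al a)).
have HA : A (rcons al a) = hat_to_opt h by rewrite hat_ofK.
case Hf: (fM (Att q qt (Some z1) a) (EHat h)) => [st'|]; last by move: Hf; rewrite /= HV.
have [Htr' Hst] := tracks_step Hwf Htr HOt HA Hf.
exists h, st'; split => //; last by apply/consistent_rcons; rewrite Hal.
apply/ext_run_rcons; exists (Env q qt (Some z1)), (Att q qt (Some z1) a).
by rewrite /fMs (negbTE Hns) /= HOt.
Qed.

End Simulation.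

Section Forward.
Variable D : setup.
Hypothesis Hwf : wf_setup D.
Local Notation Sigma := (@s_Sigma D).
Local Notation X0 := (@s_X0 D).
Local Notation Xsec := (@s_Xsec D).
Local Notation q0 := (q0 D).

Definition reaches_pos_det : Prop :=
  exists hs q qt z, ext_run (@fMs D) q0 hs (Env q qt z) /\ pos_det qt.

Variables (A : seq Sigma -> option Sigma) (al : seq Sigma) (sg : Sigma).
Hypotheses (Hatt : is_attacker A) (Hpl : inPLTG (SA A) (rcons al sg))
  (Hst : stealthy A al) (Hdet : forall x0, inEI (SA A) (rcons al sg) x0 -> x0 \in Xsec).

Lemma stopped_pos_det be r q qt z1 : al = be ++ r ->
  tracks A be (Env q qt (Some z1)) -> stopped (Env q qt (Some z1)) -> pos_det qt.
Proof.
move=> Er Htr; have E : rcons al sg = be ++ rcons r sg by rewrite Er rcons_cat.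
have Hpl' := Hpl; have Hdet' := Hdet; rewrite E in Hpl' Hdet'.
case/or3P => // Hs.
  by have := tracks_not_neg_det Htr Hpl' Hdet'; rewrite Hs.
by have := tracks_not_undetectable Hwf Htr Hpl' Hdet'; rewrite Hs.
Qed.

Lemma prefix_run be r : al = be ++ r -> reaches_pos_det \/
  exists hs q qt z1, [/\ ext_run (@fMs D) q0 hs (Env q qt (Some z1)),
    ~~ stopped (Env q qt (Some z1)), map fst hs = be & consistent A hs].
Proof.
have [x00 Hx00 _] := inPLTG_reaches Hpl.
elim/last_ind: be r => [|be a IH] r Er.
  have Htr := tracks_q0 A Hx00.
  case Hs: (stopped q0); [left | right].
    by exists [::], X0, [set (x, x) | x in X0], (Some (s_z0 D)); split;
      [constructor | apply: stopped_pos_det Er Htr Hs].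
  exists [::], X0, [set (x, x) | x in X0], (s_z0 D); split => //; first by constructor.
    by rewrite -[stopped _]/(stopped q0) Hs.
  by case.
have Er' : al = be ++ a :: r by rewrite Er cat_rcons.
case: (IH _ Er') => [|[hs [q [qt [z1 [Hrun Hns Hbe Hcon]]]]]]; first by left.
have Hpl' : inPLTG (SA A) (rcons be a ++ rcons r sg) by rewrite -rcons_cat -Er.
have [h [st' [Hrun' Hcon' Htr' Hst']]] := run_extend Hwf Hatt Hrun Hns Hbe Hcon Hpl'.
have Hst0 : stealthy A (rcons be a ++ r) by rewrite -Er.
have [q' [qt' [z1' Est]]] := Hst' (stealthy_prefix Hst0).
subst st'; case Hs: (stopped (Env q' qt' (Some z1'))); [left | right].
  exists (rcons hs (a, h)), q', qt', (Some z1').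
  by split; last apply: stopped_pos_det Er Htr' Hs.
by exists (rcons hs (a, h)), q', qt', z1'; rewrite Hs map_rcons Hbe.
Qed.

Lemma attack_reaches_pos_det : reaches_pos_det.
Proof.
case: (prefix_run (esym (cats0 al))) => // [[hs [q [qt [z1 [Hrun Hns Hal Hcon]]]]]].
have Hpl' : inPLTG (SA A) (rcons al sg ++ [::]) by rewrite cats0.
have [h [st' [Hrun' _ Htr' _]]] := run_extend Hwf Hatt Hrun Hns Hal Hcon Hpl'.
case: st' Hrun' Htr' => // q' qt' z' Hrun' [Hqt _].
exists (rcons hs (sg, h)), q', qt', z'; split => //.
apply/subsetP => x0; rewrite inE => /existsP [x /Hqt [Hx0 [s [H1 H2 _ _]]]].
by apply: Hdet; split => //; exists s.
Qed.

End Forward.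

Section SingleAttackStructures.
Variable D : setup.
Local Notation Sigma := (@s_Sigma D).
Local Notation Sv := (@s_Sv D).
Local Notation trans := (aas_state D -> evM D -> option (aas_state D)).
Local Notation q0 := (q0 D).

Definition strategy_of (fm : trans) (al : seq Sigma) : option Sigma :=
  if al is b :: al' then
    match excluded_middle_informative
      (exists hs, (exists st, ext_run fm q0 hs st) /\ map fst hs = al) with
    | left E =>
        let hs := proj1_sig (constructive_indefinite_description _ E) in
        hat_to_opt (last (b, HEps D) hs).2
    | right _ => Some (last b al')
    end
  else None.

Lemma fM_EHat_Vset q qt z a h st : @fM D (Att q qt z a) (EHat h) = Some st -> Vset a h.
Proof. by rewrite /=; case: ifP. Qed.

Section SAS.
Variable fm : trans.
Hypothesis Hfm : is_SAS fm.

Lemma SAS_Att_det st a sa h h' st1 st2 : reach fm st -> fm st (EObs a) = Some sa ->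
  fm sa (EHat h) = Some st1 -> fm sa (EHat h') = Some st2 -> h = h'.
Proof.
move=> Hst E1 E2 E3; have Hsa := reachS Hst E1.
have [q [qt [z1 [_ Esa _]]]] := fM_EObs (fMs_fM ((Hfm Hst).1 _ _ E1)).
have := (Hfm Hsa).2; rewrite Esa => -[e [_ Hu]]; subst sa.
have Eh : e = EHat h by apply: Hu; rewrite E2.
have Eh' : e = EHat h' by apply: Hu; rewrite E3.
by move: Eh'; rewrite Eh => -[].
Qed.

Lemma SAS_ext_run_det st hs1 hs2 st1 st2 : reach fm st ->
  ext_run fm st hs1 st1 -> ext_run fm st hs2 st2 -> map fst hs1 = map fst hs2 -> hs1 = hs2.
Proof.
elim: hs1 st hs2 => [|[a h] hs1 IH] st [|[a' h'] hs2] //= Hst R1 R2 [Ea Em]; subst a'.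
inversion R1 as [|? sa m ? ? ? ? E1 E2 R]; subst.
inversion R2 as [|? sa' m' ? ? ? ? E1' E2' R']; subst.
rewrite E1 in E1'; case: E1' => Esa; subst sa'.
have Eh := SAS_Att_det Hst E1 E2 E2'; subst h'.
rewrite E2 in E2'; case: E2' => Em'; subst m'.
by rewrite (IH _ _ (reachS (reachS Hst E1) E2) R R' Em).
Qed.

Lemma SAS_ext_run_fMs hs st : ext_run fm q0 hs st -> ext_run (@fMs D) q0 hs st.
Proof.
suff Hsub st1 st2 : reach fm st1 -> ext_run fm st1 hs st2 -> ext_run (@fMs D) st1 hs st2.
  by apply: Hsub; apply: reach0.
move=> + R; elim: R => [|{}st1 sa m st3 a h hs' E1 E2 _ IH] Hst; first by constructor.
have Hsa := reachS Hst E1.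
by econstructor; [apply: (Hfm Hst).1 E1 | apply: (Hfm Hsa).1 E2 | apply/IH/(reachS Hsa E2)].
Qed.

Lemma strategy_of_run hs a h st : ext_run fm q0 (rcons hs (a, h)) st ->
  strategy_of fm (rcons (map fst hs) a) = hat_to_opt h.
Proof.
move=> R; rewrite /strategy_of.
case E: (rcons (map fst hs) a) => [|b al']; first by case: (map fst hs) E.
case: excluded_middle_informative => [H|[]]; last first.
  by exists (rcons hs (a, h)); split; [exists st | rewrite map_rcons].
case: (constructive_indefinite_description _ H) => hs0 [[st0 R0] E0] /=.
have -> : hs0 = rcons hs (a, h).
  by apply: SAS_ext_run_det (reach0 fm) R0 R _; rewrite E0 -E map_rcons.
by rewrite last_rcons.
Qed.

Lemma consistent_SAS_run hs st : ext_run fm q0 hs st -> consistent (strategy_of fm) hs.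
Proof.
move=> R hs1 a h hs2 E; rewrite E -cat_rcons in R.
by have [m [Rm _]] := (ext_run_cat _ _ _ _ _).1 R; apply: strategy_of_run Rm.
Qed.

Lemma strategy_of_norun al a :
  (forall hs st, ext_run fm q0 hs st -> map fst hs <> rcons al a) ->
  strategy_of fm (rcons al a) = Some a.
Proof.
move=> Hn; rewrite /strategy_of.
case E: (rcons al a) => [|b al']; first by case: al {Hn} E.
case: excluded_middle_informative => [[hs [[st R] Em]]|_].
  by case: (Hn hs st R); rewrite Em.
by rewrite -[last b al']/(last a (b :: al')) -E last_rcons.
Qed.

Lemma SAS_induced_strategy : induced_strategy fm (strategy_of fm).
Proof.
split => // al a _; split; last exact: strategy_of_norun.
move=> hs st R /map_fst_rcons [hs' [h [Ehs <-]]]; subst hs.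
by rewrite (strategy_of_run R) last_rcons.
Qed.

Lemma SAS_attacker : is_attacker (strategy_of fm).
Proof.
split => // al a _.
have [[hs [st [R /map_fst_rcons [hs' [h [Ehs Eal]]]]]]|Hn] :=
  classic (exists hs st, ext_run fm q0 hs st /\ map fst hs = rcons al a).
  subst hs al; rewrite (strategy_of_run R).
  have /ext_run_rcons [m [sa [_ /fMs_fM /fM_EObs [q [qt [z1 [_ -> _]]]]]]] := SAS_ext_run_fMs R.
  move=> /fMs_fM /fM_EHat_Vset.
  by case: h {R} => [b|] /=; case: (a \in Sv) => //= HV; split => // _; rewrite (eqP HV).
rewrite strategy_of_norun; last by move=> hs st R Em; apply: Hn; exists hs, st.
by split => //= ->.
Qed.

End SAS.
End SingleAttackStructures.

Section MemorylessPaths.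
Variable D : setup.
Local Notation Sigma := (@s_Sigma D).
Local Notation path := (seq (Sigma * hatev D)).
Local Notation q0 := (q0 D).

Definition chooses (p : path) (sa : aas_state D) (h : hatev D) : Prop :=
  exists hs1 a hs2 st1 st2, [/\ p = hs1 ++ (a, h) :: hs2, ext_run (@fMs D) q0 hs1 st1,
    fMs st1 (EObs a) = Some sa & fMs sa (EHat h) = Some st2].

Definition memoryless (p : path) : Prop :=
  forall sa h h', chooses p sa h -> chooses p sa h' -> h = h'.

Lemma ext_run_shortcut hs st hs1 a h hs2 st1 sa hs1' a' h' hs2' st1' st2' :
  hs = hs1 ++ (a, h) :: hs2 -> hs = hs1' ++ (a', h') :: hs2' ->
  ext_run (@fMs D) q0 hs1 st1 -> fMs st1 (EObs a) = Some sa ->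
  ext_run (@fMs D) q0 hs1' st1' -> fMs st1' (EObs a') = Some sa ->
  fMs sa (EHat h') = Some st2' -> ext_run (@fMs D) q0 hs st ->
  ext_run (@fMs D) q0 (hs1 ++ (a, h') :: hs2') st.
Proof.
move=> _ -> R1 O1 R1' O1' H2'.
move=> /ext_run_cat [m [/(ext_run_det R1') <- R]].
inversion R as [|? sa0 m0 ? ? ? ? E3 E4 R3]; subst.
rewrite O1' in E3; case: E3 => ?; subst sa0.
rewrite H2' in E4; case: E4 => ?; subst m0.
by apply/ext_run_cat; exists st1; split => //; econstructor; eauto.
Qed.

Lemma memoryless_run hs st : ext_run (@fMs D) q0 hs st ->
  exists2 hs', ext_run (@fMs D) q0 hs' st & memoryless hs'.
Proof.
move: {2}(size hs) (leqnn (size hs)) => n; elim: n hs => [|n IH] hs.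
  rewrite leqn0 => /nilP -> R; exists [::] => // sa h h' [[|? ?] [? [? [? [? []]]]]] //.
move=> Hsz R; have [Hm|Hnm] := classic (memoryless hs); first by exists hs.
have [sa [h [h' [[hs1 [a [hs2 [st1 [st2 [E1 R1 O1 H1]]]]]]
                [hs1' [a' [hs2' [st1' [st2' [E2 R1' O1' H2]]]]]] Hne]]]] :
    exists sa h h', [/\ chooses hs sa h, chooses hs sa h' & h <> h'].
  apply: NNPP => Hn; apply: Hnm => sa h h' C1 C2.
  by apply: NNPP => Hne; apply: Hn; exists sa, h, h'.
have Hs1 : size hs = size hs1 + (size hs2).+1 by rewrite E1 size_cat.
have Hs2 : size hs = size hs1' + (size hs2').+1 by rewrite E2 size_cat.
case: (ltngtP (size hs1) (size hs1')) => Hc.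
- apply: (IH (hs1 ++ (a, h') :: hs2')); last exact: ext_run_shortcut E1 E2 R1 O1 R1' O1' H2 R.
  by rewrite size_cat /=; lia.
- apply: (IH (hs1' ++ (a', h) :: hs2)); last exact: ext_run_shortcut E2 E1 R1' O1' R1 O1 H1 R.
  by rewrite size_cat /=; lia.
- have := congr1 (nth (a, h) ^~ (size hs1)) (etrans (esym E1) E2).
  by rewrite !nth_cat Hc ltnn subnn => -[].
Qed.

(* Off the path, [epsilon] returns an arbitrary event, which is then replaced
   by the always valid [HSym a]. *)
Definition path_choice (p : path) q qt z (a : Sigma) : hatev D :=
  let h := epsilon (inhabits (HEps D)) (chooses p (Att q qt z a)) in
  if Vset a h then h else HSym a.

Definition sas_of_path (p : path) (st : aas_state D) (e : evM D) : option (aas_state D) :=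
  match st, e with
  | Env _ _ _, _ => fMs st e
  | Att q qt z a, EHat h =>
      if hat_to_opt h == hat_to_opt (path_choice p q qt z a) then fMs st e else None
  | Att _ _ _ _, EObs _ => None
  end.

Lemma hat_to_opt_inj : injective (@hat_to_opt D).
Proof. by case=> [b|] [b'|] //= [->]. Qed.

Lemma sas_of_path_fMs p st e st' : sas_of_path p st e = Some st' -> fMs st e = Some st'.
Proof. by case: st e => // q qt z a [//|h] /=; case: eqP. Qed.

Lemma Vset_path_choice p q qt z a : Vset a (path_choice p q qt z a).
Proof. by rewrite /path_choice; case: ifP => //= _; case: ifP. Qed.

Lemma sas_of_path_SAS p : is_SAS (sas_of_path p).
Proof.
move=> st _; split; first exact: sas_of_path_fMs.
case: st => [//|q qt z a]; exists (EHat (path_choice p q qt z a)); split.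
  by rewrite /= eqxx /fMs /= Vset_path_choice.
by case=> [//|h] /=; case: eqP => // /hat_to_opt_inj ->.
Qed.

Lemma path_choice_chooses p q qt z a h : memoryless p ->
  chooses p (Att q qt z a) h -> path_choice p q qt z a = h.
Proof.
move=> Hm Hc; have Hc' := epsilon_spec (inhabits (HEps D)) _ (ex_intro _ h Hc).
rewrite /path_choice (Hm _ _ _ Hc' Hc).
by have [? [? [? [? [? [_ _ _ /fMs_fM /fM_EHat_Vset ->]]]]]] := Hc.
Qed.

Lemma ext_run_sas_of_path p st : memoryless p ->
  ext_run (@fMs D) q0 p st -> ext_run (sas_of_path p) q0 p st.
Proof.
move=> Hm; suff Hsuf suf pre m : p = pre ++ suf -> ext_run (@fMs D) q0 pre m ->
    ext_run (@fMs D) m suf st -> ext_run (sas_of_path p) m suf st.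
  by apply: (Hsuf p [::]); constructor.
elim: suf pre m => [|[a h] suf IH] pre m Ep Rpre Rsuf; first by inversion Rsuf; constructor.
move: Ep Rpre; inversion Rsuf as [|? sa m2 ? ? ? ? E1 E2 R]; subst => Ep Rpre.
have Hc : chooses p sa h by rewrite Ep; exists pre, a, suf, m, m2.
have [q [qt [z1 [Em Esa _]]]] := fM_EObs (fMs_fM E1); subst m sa.
apply: (er_cons (fm := sas_of_path p) (sa := Att q qt (Some z1) a) (st2 := m2)) => //.
  by rewrite /sas_of_path (path_choice_chooses Hm Hc) eqxx.
apply: (IH (rcons pre (a, h))) R; first by rewrite Ep -cats1 -catA.
by apply/ext_run_rcons; do 2 eexists; split; eauto.
Qed.

End MemorylessPaths.

Section Detection.
Variable D : setup.
Hypothesis Hwf : wf_setup D.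
Local Notation Sigma := (@s_Sigma D).
Local Notation delta := (@s_delta D).
Local Notation X0 := (@s_X0 D).
Local Notation strategy := (seq Sigma -> option Sigma).
Local Notation q0 := (q0 D).

Lemma consistent_run_detectable (B : strategy) hs a h q qt z x00 : x00 \in X0 ->
  consistent B (rcons hs (a, h)) -> ext_run (@fM D) q0 (rcons hs (a, h)) (Env q qt z) ->
  pos_det qt -> IS_detectable B.
Proof.
move=> Hx00 Hcon R Hpos; have [Hqt _] := tracks_run Hwf Hx00 R Hcon.
move/ext_run_rcons: R => [m [sa [R O _]]].
have [q1 [qt1 [z1 [Em _ HOt]]]] := fM_EObs O; subst m.
have Htr := tracks_run Hwf Hx00 R (proj1 ((consistent_rcons _ _ _ _).1 Hcon)).
have [Ha1 Ha2 [x0 [x [Hx0 HR Hd]]]] := (in_Ot Hwf Htr a).1 HOt.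
case Hy: (delta x a) Hd => [y|//] _.
exists (map fst hs), a; split => //.
- exact: reaches_inPLTG Hx0 (reaches_obs_reaches (reaches_obs_rcons HR Ha1 Ha2 Hy)).
- by have [_ /(_ z1 erefl) []] := Htr.
move=> x0' [Hx0' [s Hs HP]]; have [x' Hx'] := inLT_deltas Hs.
have [y' Hy'] : exists y', reaches_obs (SA B) (rcons (map fst hs) a) x0' y'.
  by apply: (reaches_prefix (r := [::]) (x := x')); exists s; rewrite cats0.
apply: (subsetP Hpos); rewrite inE; apply/existsP; exists y'.
by apply/Hqt; rewrite map_rcons.
Qed.

Lemma q0_pos_det_detectable (A B : strategy) al sg :
  inPLTG (SA A) (rcons al sg) -> pos_det [set (x, x) | x in X0] -> IS_detectable B.
Proof.
move=> Hpl Hpos.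
have [c [r Er]] : exists c r, rcons al sg = rcons [::] c ++ r.
  by case: al {Hpl} => [|c al]; [exists sg, [::] | exists c, (rcons al sg)].
rewrite Er in Hpl; have [x0 [x [Hx0 HR Hd Hc1 Hc2]]] := inPLTG_rcons_enabled Hpl.
have HR' : reaches (SA B) [::] x0 x by apply: reaches_nil_eq HR.
case Hy: (delta x c) Hd => [y|//] _.
exists [::], c; split => //.
- exact: reaches_inPLTG Hx0 (reaches_obs_reaches (reaches_obs_rcons HR' Hc2 Hc1 Hy)).
- by exists x0, x0 => //; apply: reaches_obs_reaches (reaches_obs_refl _ _).
move=> x0' [Hx0' _]; apply: (subsetP Hpos); rewrite inE; apply/existsP.
by exists x0'; apply: imset_f.
Qed.

End Detection.

Theorem theorem2 (D : setup) (Hwf : wf_setup D) :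
  (exists A, @is_attacker D A /\ @IS_detectable D A) <->
  (exists fm, @is_SAS D fm /\
     exists A, [/\ @induced_strategy D fm A, @is_attacker D A & @IS_detectable D A]).
Proof.
split; last by move=> [fm [_ [A [_ HA Hdet]]]]; exists A.
move=> [A [Hatt [al [sg [_ Hpl Hst Hdet]]]]].
have [hs [q [qt [z [R Hpos]]]]] := attack_reaches_pos_det Hwf Hatt Hpl Hst Hdet.
have [p Rp Hm] := memoryless_run R.
have Hfm : is_SAS (sas_of_path p) by apply: sas_of_path_SAS.
exists (sas_of_path p); split => //; exists (strategy_of (sas_of_path p)).
split; [exact: SAS_induced_strategy | exact: SAS_attacker |].
have [x00 Hx00 _] := inPLTG_reaches Hpl.
case/lastP: p Rp Hm Hfm => [|p [a h]] Rp Hm Hfm.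
  by inversion Rp; subst; apply: q0_pos_det_detectable Hpl Hpos.
have Rfm := ext_run_sas_of_path Hm Rp.
apply: (consistent_run_detectable Hwf Hx00 (consistent_SAS_run Hfm Rfm) _ Hpos).
exact: ext_run_sub (@fMs_fM D) Rp.
Qed.
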